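(* Let $(V,\mathcal{E})$ be a forward neutral genealogy model. For each $n$, the random vector $(\mathcal{T}(v))_{v\in V_n}$ is exchangeable.
   Context: Data: $\tau\in\mathbb{N}\cup\{\infty\}$, positive integers $(X_n)_{n<\tau}$, vectors $k_n=(k_n(i))_{i=1}^{X_n}$ of nonnegative integers with $\sum_ik_n(i)=X_{n+1}$. $V_n=\{(n,i):1\le i\le X_n\}$. A genealogy model is a random edge set $\mathcal{E}\subset\bigcup_nV_n\times V_{n+1}$ such that each vertex of $V_{n+1}$ has exactly one parent in $V_n$ and the out-degrees in $V_n$ are a permutation of $k_n$. $\mathcal{E}_n=\mathcal{E}\cap(V_n\times V_{n+1})$, $K_n=(\mathrm{od}((n,i)))_i$. Forward neutral: for all $n$, $K_n$ is exchangeable and independent of $(\mathcal{E}_m)_{m<n}$. For $v\in V_n$, $D(v)$ is the set of vertices reachable from $v$ by a directed path in $\mathcal{E}$ (including $v$), and $\mathcal{T}(v)$ is the subgraph induced by $D(v)$, taken modulo isomorphism of directed graphs. *)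

From HB Require Import structures.
From mathcomp Require Import all_boot all_order all_algebra.
From mathcomp Require Import all_classical all_reals all_analysis.
From mathcomp Require Import fingroup perm.
From Stdlib Require Import Relation_Operators.

Set Implicit Arguments.
Unset Strict Implicit.
Unset Printing Implicit Defensive.

Local Open Scope classical_set_scope.

(* Vertices (n, i) : generation n, index i (1 <= i <= X n). *)
Definition vertex := (nat * nat)%type.

(* tau : option nat, None = infinity.  [lvl_lt tau n] means n < tau. *)
Definition lvl_lt (tau : option nat) (n : nat) : bool :=
  if tau is Some t then (n < t)%N else true.

Definition in_V (tau : option nat) (X : nat -> nat) (v : vertex) : Prop :=
  lvl_lt tau v.1 /\ (1 <= v.2 <= X v.1)%N.

Definition data_ok (tau : option nat) (X : nat -> nat) (k : nat -> seq nat) : Prop :=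
  (forall n, lvl_lt tau n -> (0 < X n)%N) /\
  (forall n, lvl_lt tau n.+1 -> size (k n) = X n /\ sumn (k n) = X n.+1).

(* out-degree of v in the edge relation E (edges only go to the next generation) *)
Definition outdeg (X : nat -> nat) (E : vertex -> vertex -> bool) (v : vertex) : nat :=
  count (fun j => E v (v.1.+1, j)) (iota 1 (X v.1.+1)).

Definition Kvec (X : nat -> nat) (E : vertex -> vertex -> bool) (n : nat) : seq nat :=
  [seq outdeg X E (n, i) | i <- iota 1 (X n)].

Definition genealogy (tau : option nat) (X : nat -> nat) (k : nat -> seq nat)
    (E : vertex -> vertex -> bool) : Prop :=
  (forall u w, E u w -> [/\ in_V tau X u, in_V tau X w & w.1 = u.1.+1]) /\
  (forall w, in_V tau X w -> (0 < w.1)%N ->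
     exists u, E u w /\ forall u', E u' w -> u' = u) /\
  (forall n, lvl_lt tau n.+1 -> perm_eq (Kvec X E n) (k n)).

Definition perm_seq (m : nat) (s : 'S_m) (x : seq nat) : seq nat :=
  [seq nth 0%N x (s i) | i <- enum 'I_m].

(* Edge relations E : vertex -> vertex -> bool carry the product (cylinder)
   sigma-algebra generated by the events "u -> w is an edge". *)
Definition edge_cyl : set (set (vertex -> vertex -> bool)) :=
  [set A | exists u w, A = [set f : vertex -> vertex -> bool | f u w]].

Definition past (n : nat) (E : vertex -> vertex -> bool) : vertex -> vertex -> bool :=
  fun u w => (u.1 < n)%N && E u w.

(* Directed graphs on (a subset of) the countable vertex universe. *)
Definition graph := ((vertex -> Prop) * (vertex -> vertex -> Prop))%type.

Definition empty_graph : graph := (fun _ => False, fun _ _ => False).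

Definition wf_graph (G : graph) : Prop := forall a b, G.2 a b -> G.1 a /\ G.1 b.

Definition dg_iso (G H : graph) : Prop :=
  wf_graph G /\ wf_graph H /\
  exists f : vertex -> vertex,
    [/\ (forall a, G.1 a -> H.1 (f a)),
        (forall a b, G.1 a -> G.1 b -> f a = f b -> a = b),
        (forall c, H.1 c -> exists2 a, G.1 a & f a = c) &
        (forall a b, G.1 a -> G.1 b -> (G.2 a b <-> H.2 (f a) (f b)))].

Definition desc (E : vertex -> vertex -> bool) (v w : vertex) : Prop :=
  clos_refl_trans vertex (fun a b => E a b) v w.

Definition Tsub (E : vertex -> vertex -> bool) (v : vertex) : graph :=
  (desc E v, fun a b => [/\ desc E v a, desc E v b & E a b]).

(* (T(v_{s(i)}))_i indexed by i < X n (coordinate i stands for vertex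
   (n, i+1)); coordinates >= X n are filled with the empty graph. *)
Definition Tvec (X : nat -> nat) (E : vertex -> vertex -> bool) (n : nat)
    (s : 'S_(X n)) : nat -> graph :=
  fun i => match @insub nat (fun i => (i < X n)%N) 'I_(X n) i with
           | Some j => Tsub E (n, (s j).+1)
           | None => empty_graph
           end.

(* Sigma-algebra on tuples of graphs: product (cylinder) sigma-algebra. *)
Definition graphs_cyl : set (set (nat -> graph)) :=
  [set A | (exists i u, A = [set g | (g i).1 u]) \/
           (exists i u w, A = [set g | (g i).2 u w])].

Definition iso_invariant (B : set (nat -> graph)) : Prop :=
  forall g g', (forall i, dg_iso (g i) (g' i)) -> B g -> B g'.

Definition forward_neutral (R : realType) (d : measure_display)
    (Omega : measurableType d) (P : probability Omega R)
    (tau : option nat) (X : nat -> nat) (e : Omega -> vertex -> vertex -> bool) : Prop :=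
  forall n, lvl_lt tau n ->
    (forall (s : 'S_(X n)) (A : set (seq nat)),
        P [set w | A (Kvec X (e w) n)] = P [set w | A (perm_seq s (Kvec X (e w) n))]) /\
    (forall (A : set (seq nat)) (C : set (vertex -> vertex -> bool)),
        <<s edge_cyl >> C ->
        P ([set w | A (Kvec X (e w) n)] `&` [set w | C (past n (e w))]) =
        (P [set w | A (Kvec X (e w) n)] * P [set w | C (past n (e w))])%E).

From HB Require Import structures.
From mathcomp Require Import all_boot all_order all_algebra.
From mathcomp Require Import all_classical all_reals all_analysis.
From mathcomp Require Import fingroup perm.
From Stdlib Require Import Relation_Operators Operators_Properties.

Set Implicit Arguments.
Unset Strict Implicit.
Unset Printing Implicit Defensive.

(* Order the roots of generation n by a permutation s and explore their
   descendants breadth first, taking children in increasing index order.  This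
   yields, for every h, the list [level E L0 h] of the vertices of generation
   n + h in exploration order and the sequence [offspring E L0 h] of their
   out-degrees.
   - Combinatorics: the descendant tree of the i-th explored root is isomorphic
     to the tree of the i-th root of a canonical forest [forest w] built from
     the offspring sequences w alone (Tvec_forest_iso).
   - Locality: the first h offspring sequences only depend on the edges below
     generation n + h; they are measurable, and events on trees are generated
     by events on finitely many offspring sequences (tree_vector_events).
   - Probability: the past below generation m = n + h + 1 fixes level h + 1 and
     offspring 0..h; offspring h + 1 is then K_m read along level h + 1, so by
     forward neutrality its law is that of K_m, independently of the past
     (split_given_level).  Hence the finite-dimensional laws of the offspring
     sequences do not depend on s, and a Dynkin argument extends this to the
     generated sigma-algebra (offspring_law_indep).
   The theorem combines both halves with the isomorphism invariance of B. *)

Lemma index_flatten (T : eqType) (c : T -> seq nat) (l : seq T) x y :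
  (forall x1 x2, y \in c x1 -> y \in c x2 -> x1 = x2) ->
  x \in l -> y \in c x ->
  index y (flatten [seq c z | z <- l]) =
  sumn (take (index x l) [seq size (c z) | z <- l]) + index y (c x).
Proof.
move=> hd; elim: l => [//|x' l IH]; rewrite inE /= => hx hy.
rewrite index_cat; case: (eqVneq x' x) => [->|hne]; first by rewrite /= hy.
have -> : (y \in c x') = false.
  by apply/negbTE/negP => /hd /(_ hy) /esym; apply/eqP; rewrite eq_sym.
by rewrite /= -addnA IH //; move: hx; rewrite eq_sym (negbTE hne).
Qed.

Lemma sumn_take_succ (l : seq nat) i : i < size l ->
  sumn (take i.+1 l) = sumn (take i l) + nth 0 l i.
Proof. by move=> hi; rewrite (take_nth 0 hi) sumn_rcons. Qed.

Lemma map_constant (T : Type) (s : seq T) : [seq 0 | _ <- s] = nseq (size s) 0.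
Proof. by elim: s => //= x s ->. Qed.

Lemma dg_iso_sym G H : dg_iso G H -> dg_iso H G.
Proof.
case=> wG [wH [f [f1 f2 f3 f4]]]; split => //; split => //.
pose g c := if pselect (exists2 a, G.1 a & f a = c) is left p
  then projT1 (cid2 p) else c.
have gP c : H.1 c -> G.1 (g c) /\ f (g c) = c.
  move=> hc; rewrite /g; case: pselect => [p|np]; last by exfalso; apply: np; exact: f3.
  by case: (cid2 p).
exists g; split.
- by move=> c /gP [].
- move=> a b ha hb e; have [_ <-] := gP _ ha; have [_ <-] := gP _ hb; by rewrite e.
- move=> a ha; exists (f a); first exact: f1.
  have [g1 g2] := gP _ (f1 _ ha); exact: f2 g2.
- move=> a b ha hb; have [ga fa] := gP _ ha; have [gb fb] := gP _ hb.
  by rewrite f4 // fa fb.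
Qed.

Lemma empty_graph_iso : dg_iso empty_graph empty_graph.
Proof. by split; [|split; [|exists id; split]]. Qed.

Lemma lvl_lt_pred tau m : lvl_lt tau m.+1 -> lvl_lt tau m.
Proof. by case: tau => //= t /ltnW. Qed.

Section Exploration.
Variables (X : nat -> nat) (n : nat).

Definition children (E : vertex -> vertex -> bool) (m x : nat) : seq nat :=
  [seq y <- iota 1 (X m.+1) | E (m, x) (m.+1, y)].

Fixpoint level (E : vertex -> vertex -> bool) (L0 : seq nat) (j : nat) : seq nat :=
  if j is j'.+1 then flatten [seq children E (n + j') x | x <- level E L0 j']
  else L0.

Definition offspring E L0 (j : nat) : seq nat :=
  [seq size (children E (n + j) x) | x <- level E L0 j].

(* canonical forest rooted at generation n with offspring sequences w: the
   i-th vertex of generation n + j has as children the next w j`_i vertices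
   of generation n + j + 1 *)
Definition forest (w : nat -> seq nat) : vertex -> vertex -> bool := fun a b =>
  [&& n <= a.1, b.1 == a.1.+1, 0 < a.2 <= size (w (a.1 - n)) &
      sumn (take a.2.-1 (w (a.1 - n))) < b.2 <= sumn (take a.2 (w (a.1 - n)))].

Definition relabel E L0 (v : vertex) : vertex :=
  (v.1, (index v.2 (level E L0 (v.1 - n))).+1).

Lemma mem_children E m x y :
  (y \in children E m x) = (0 < y <= X m.+1) && E (m, x) (m.+1, y).
Proof. by rewrite mem_filter mem_iota andbC add1n ltnS. Qed.

Lemma uniq_children E m x : uniq (children E m x).
Proof. by rewrite filter_uniq // iota_uniq. Qed.

Section Genealogy.
Variables (tau : option nat) (k : nat -> seq nat).
Variables (E : vertex -> vertex -> bool) (L0 : seq nat).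
Hypothesis hgen : genealogy tau X k E.

Lemma genealogy_edge u w :
  E u w -> [/\ in_V tau X u, in_V tau X w & w.1 = u.1.+1].
Proof. by case: hgen => h _; apply: h. Qed.

(* a vertex has a single parent, so children lists are disjoint *)
Lemma children_disjoint m y x1 x2 :
  y \in children E m x1 -> y \in children E m x2 -> x1 = x2.
Proof.
rewrite !mem_children => /andP[_ h1] /andP[_ h2].
case: hgen => _ [hp _].
have [_ hw _] := genealogy_edge h1.
have [u [_ hu]] := hp _ hw erefl.
by have := hu _ h1; rewrite -(hu _ h2) => -[].
Qed.

Lemma level_uniq j : uniq L0 -> uniq (level E L0 j).
Proof.
move=> hL0; elim: j => [//|j IH] /=.
elim: (level E L0 j) IH => [//|x l IHl] /= /andP[hx hl].
rewrite cat_uniq uniq_children IHl //= andbT.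
apply/hasP => -[y /flatten_mapP [x' hx' hy] hy2].
by move: hx; rewrite (children_disjoint hy2 hy) hx'.
Qed.

Definition explored (v : vertex) := n <= v.1 /\ v.2 \in level E L0 (v.1 - n).

Lemma explored_root x0 : x0 \in L0 -> explored (n, x0).
Proof. by move=> h; split => //=; rewrite subnn. Qed.

Lemma relabel_inj a b :
  explored a -> explored b -> relabel E L0 a = relabel E L0 b -> a = b.
Proof.
case: a => m x; case: b => m' x' [_ ha] [_ hb] [em ei]; subst m'.
by move: ha hb => /= ha hb; rewrite -(nth_index 0 ha) -(nth_index 0 hb) ei.
Qed.

Lemma relabel_edge a b : explored a -> E a b ->
  explored b /\ forest (offspring E L0) (relabel E L0 a) (relabel E L0 b).
Proof.
case: a => m x [/= hnm hx] he.
have [_ [_ hy] hb1] := genealogy_edge he.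
case: b he hy hb1 => m1 y he hy /= hb1; subst m1.
move: hx he hy; have -> : m = n + (m - n) by rewrite subnKC.
set j := m - n; rewrite addKn /= => hx he hy.
have hyc : y \in children E (n + j) x by rewrite mem_children hy he.
have hsn : (n + j).+1 - n = j.+1 by rewrite -addnS addKn.
split.
  split; first by rewrite /= leqW // leq_addr.
  by rewrite /= hsn /=; apply/flatten_mapP; exists x.
rewrite /forest /relabel /= hsn addKn /= leq_addr eqxx /=.
have hidx : index x (level E L0 j) < size (level E L0 j) by rewrite index_mem.
rewrite /offspring size_map hidx /=.
rewrite (index_flatten (@children_disjoint (n + j) y) hx hyc).
rewrite sumn_take_succ ?size_map // (nth_map 0) // nth_index //.
by rewrite ltnS leq_addr /= -addnS leq_add2l index_mem.
Qed.

Lemma relabel_edge_back a c : explored a ->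
  forest (offspring E L0) (relabel E L0 a) c ->
  exists b, E a b /\ relabel E L0 b = c.
Proof.
case: a => m x [/= hnm hx].
move: hx; have -> : m = n + (m - n) by rewrite subnKC.
set j := m - n; rewrite addKn => hx.
have hsn : (n + j).+1 - n = j.+1 by rewrite -addnS addKn.
have hidx : index x (level E L0 j) < size (level E L0 j) by rewrite index_mem.
case: c => c1 t; rewrite /forest /relabel /= addKn => /and4P[_ /eqP -> _].
rewrite /offspring sumn_take_succ ?size_map // (nth_map 0) // nth_index //.
set S := sumn _ => /andP[h1 h2].
set r := t.-1 - S.
have hr : r < size (children E (n + j) x).
  rewrite /r ltn_subLR; last by rewrite -ltnS (ltn_predK h1).
  by rewrite -ltnS (ltn_predK h1) ltnS.
set y := nth 0 (children E (n + j) x) r.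
have hyc : y \in children E (n + j) x by apply: mem_nth.
exists ((n + j).+1, y); split; first by move: hyc; rewrite mem_children => /andP[].
rewrite /= hsn /= (index_flatten (@children_disjoint (n + j) y) hx hyc).
rewrite index_uniq ?uniq_children // /r.
congr (_, _); rewrite subnKC; first by rewrite (ltn_predK h1).
by rewrite -ltnS (ltn_predK h1).
Qed.

Lemma relabel_desc v u : explored v -> desc E v u ->
  explored u /\ desc (forest (offspring E L0)) (relabel E L0 v) (relabel E L0 u).
Proof.
move=> gv h; elim: h gv => [a b hab|a|a b c _ IH1 _ IH2] ga.
- have [gb hg] := relabel_edge ga hab; split => //; exact: rt_step.
- by split => //; apply: rt_refl.
- have [gb h1] := IH1 ga; have [gc h2] := IH2 gb.
  by split => //; apply: rt_trans h2.
Qed.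

Lemma relabel_desc_back v c : explored v ->
  desc (forest (offspring E L0)) (relabel E L0 v) c ->
  exists u, [/\ desc E v u, explored u & relabel E L0 u = c].
Proof.
move=> gv /clos_rt_rtn1_iff h.
elim: h => [|y z hyz _ [u [hu gu fu]]]; first by exists v; split => //; apply: rt_refl.
subst y; have [b [hb fb]] := relabel_edge_back gu hyz.
exists b; split => //; first by apply: rt_trans hu (rt_step _ _ _ _ hb).
by case: (relabel_edge gu hb).
Qed.

Lemma Tsub_forest_iso x0 : x0 \in L0 ->
  dg_iso (Tsub E (n, x0)) (Tsub (forest (offspring E L0)) (relabel E L0 (n, x0))).
Proof.
move=> hx0; have g0 := explored_root hx0.
split; first by move=> a b [].
split; first by move=> a b [].
exists (relabel E L0); split.
- by move=> a /= ha; case: (relabel_desc g0 ha).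
- move=> a b /= ha hb; apply: relabel_inj.
  + by case: (relabel_desc g0 ha).
  + by case: (relabel_desc g0 hb).
- by move=> c /= /(relabel_desc_back g0) [u [hu _ <-]]; exists u.
- move=> a b /= ha hb.
  have [ga da] := relabel_desc g0 ha; have [gb db] := relabel_desc g0 hb.
  split; first by case => _ _ hab; split => //; case: (relabel_edge ga hab).
  case=> _ _ hg; split => //.
  have [b' [hb' fb']] := relabel_edge_back ga hg.
  have gb' : explored b' by case: (relabel_edge ga hb').
  by rewrite -(relabel_inj gb' gb fb').
Qed.

End Genealogy.

Definition roots (s : 'S_(X n)) : seq nat := [seq (s i).+1 | i <- enum 'I_(X n)].

Lemma roots_uniq s : uniq (roots s).
Proof.
by rewrite map_inj_uniq ?enum_uniq // => i j [] /val_inj; exact: perm_inj.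
Qed.

Lemma roots_range s x : x \in roots s -> 0 < x <= X n.
Proof. by rewrite /roots => /mapP [i _ ->] /=; rewrite ltn_ord. Qed.

Lemma Tvec_forest_iso tau k E (s : 'S_(X n)) j : genealogy tau X k E ->
  dg_iso (@Tvec X E n s j) (@Tvec X (forest (offspring E (roots s))) n 1 j).
Proof.
move=> hg; rewrite /Tvec; case: insub => [i|]; last exact: empty_graph_iso.
have hx : (s i).+1 \in roots s by apply: map_f; rewrite mem_enum.
have := Tsub_forest_iso hg hx.
rewrite /relabel /= subnn /= /roots.
rewrite (index_map (f := fun i0 => (s i0).+1)); first by rewrite index_enum_ord perm1.
by move=> i1 i2 [] /val_inj; exact: perm_inj.
Qed.

End Exploration.

Section Locality.
Variables (X : nat -> nat) (n : nat).

Definition agree_below (E E' : vertex -> vertex -> bool) (h : nat) :=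
  forall m x y, m < n + h -> 0 < x <= X m -> 0 < y <= X m.+1 ->
    E (m, x) (m.+1, y) = E' (m, x) (m.+1, y).

Definition edge_slots (h : nat) : seq (vertex * vertex) :=
  flatten [seq [seq ((m, x), (m.+1, y)) | x <- iota 1 (X m), y <- iota 1 (X m.+1)]
          | m <- iota 0 (n + h)].

Lemma agree_below_slots E E' h :
  (forall p, p \in edge_slots h -> E p.1 p.2 = E' p.1 p.2) -> agree_below E E' h.
Proof.
move=> hp m x y hm hx hy; apply: (hp ((m, x), (m.+1, y))).
apply/flatten_mapP; exists m; first by rewrite mem_iota.
by apply/allpairsP; exists (x, y); rewrite !mem_iota !add1n !ltnS.
Qed.

Lemma children_agree E E' m x :
  (forall y, 0 < y <= X m.+1 -> E (m, x) (m.+1, y) = E' (m, x) (m.+1, y)) ->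
  children X E m x = children X E' m x.
Proof.
move=> h; apply: eq_in_filter => y.
by rewrite mem_iota add1n ltnS => hy; apply: h.
Qed.

Section Roots.
Variable L0 : seq nat.
Hypothesis hL0 : forall x, x \in L0 -> 0 < x <= X n.

Lemma level_range E j y : y \in level X n E L0 j -> 0 < y <= X (n + j).
Proof.
case: j => [|j] /=; first by rewrite addn0; apply: hL0.
by move=> /flatten_mapP [x _]; rewrite mem_children addnS => /andP[].
Qed.

Lemma level_agree E E' h j : agree_below E E' h -> j <= h ->
  level X n E L0 j = level X n E' L0 j.
Proof.
move=> ha; elim: j => [//|j IH] hj /=.
rewrite -IH ?(ltnW hj) //; congr flatten; apply/eq_in_map => x hx.
apply: children_agree => y hy; apply: ha => //; first by rewrite ltn_add2l.
exact: level_range hx.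
Qed.

Lemma offspring_agree E E' h j : agree_below E E' h -> j < h ->
  offspring X n E L0 j = offspring X n E' L0 j.
Proof.
move=> ha hj; rewrite /offspring (level_agree ha (ltnW hj)).
apply/eq_in_map => x hx; congr size; apply: children_agree => y hy.
apply: ha => //; first by rewrite ltn_add2l.
exact: level_range hx.
Qed.

End Roots.

Definition trunc (h : nat) (w : nat -> seq nat) : nat -> seq nat :=
  fun j => if j < h then w j else [::].

Lemma trunc_offspring_agree E E' (L0 : seq nat) h : (forall x, x \in L0 -> 0 < x <= X n) ->
  agree_below E E' h -> trunc h (offspring X n E L0) = trunc h (offspring X n E' L0).
Proof.
move=> hr ha; apply: funext => j; rewrite /trunc; case: ifP => // hj.
exact: (offspring_agree hr ha hj).
Qed.

Lemma forest_edge_level w a b : forest n w a b -> b.1 = a.1.+1.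
Proof. by case/and4P => _ /eqP. Qed.

Lemma forest_agree (w w' : nat -> seq nat) h a b :
  (forall j, j < h -> w j = w' j) -> a.1 < n + h -> forest n w a b = forest n w' a b.
Proof.
move=> hw ha; rewrite /forest; case: (leqP n a.1) => hna //=.
by rewrite hw // ltn_subLR.
Qed.

Lemma desc_forest_agree (w w' : nat -> seq nat) h v u :
  (forall j, j < h -> w j = w' j) -> u.1 <= n + h ->
  desc (forest n w) v u -> desc (forest n w') v u.
Proof.
move=> hw hu /clos_rt_rtn1_iff hd; apply/clos_rt_rtn1_iff.
elim: hd hu => [|y z hyz _ IH] hz; first exact: rtn1_refl.
have hy : y.1 < n + h by rewrite -ltnS -(forest_edge_level hyz).
apply: Relation_Operators.rtn1_trans (IH (ltnW hy)).
by rewrite -(forest_agree _ hw hy).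
Qed.

End Locality.

Local Open Scope classical_set_scope.

Lemma measurable_bool_pattern d (T : measurableType d) (I : Type)
    (b : I -> T -> bool) (bs : seq I) (F : seq bool -> Prop) :
  (forall i, measurable [set t | b i t]) ->
  measurable [set t | F [seq b i t | i <- bs]].
Proof.
move=> hb; elim: bs F => [|i bs IH] F /=.
  case: (pselect (F [::])) => hF.
    by rewrite (_ : [set _ | _] = setT) //; apply/seteqP; split.
  by rewrite (_ : [set _ | _] = set0) //; apply/seteqP; split.
rewrite (_ : [set _ | _] =
   ([set t | b i t] `&` [set t | F (true :: [seq b i t | i <- bs])]) `|`
   (~` [set t | b i t] `&` [set t | F (false :: [seq b i t | i <- bs])])).
  apply: measurableU; apply: measurableI => //.
  - exact: (IH (fun l => F (true :: l))).
  - by apply: measurableC; exact: hb.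
  - exact: (IH (fun l => F (false :: l))).
apply/seteqP; split => t /=; first by case: (b i t) => h; [left|right].
move=> [[h1 h2]|[h1 h2]]; first by rewrite h1.
by move/negP/negbTE: h1 => ->.
Qed.

Lemma measurable_finitely_determined d (T : measurableType d)
    (e : T -> vertex -> vertex -> bool) (PL : seq (vertex * vertex)) (Y : Type)
    (F : (vertex -> vertex -> bool) -> Y) (A : set Y) :
  (forall u w, measurable [set t | e t u w]) ->
  (forall E E', (forall p, p \in PL -> E p.1 p.2 = E' p.1 p.2) -> F E = F E') ->
  measurable [set t | A (F (e t))].
Proof.
move=> he hF.
pose rb (bs : seq bool) : vertex -> vertex -> bool :=
  fun u w => nth false bs (index (u, w) PL).
have key E : F E = F (rb [seq E p.1 p.2 | p <- PL]).
  apply: hF => p hp; rewrite /rb -surjective_pairing.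
  by rewrite (nth_map p) ?index_mem // nth_index.
rewrite (_ : [set _ | _] = [set t | (A \o F \o rb) [seq e t p.1 p.2 | p <- PL]]).
  by apply: measurable_bool_pattern => p; apply: he.
by apply/seteqP; split => t /=; rewrite -key.
Qed.

Lemma edge_cyl_finitely_determined (PL : seq (vertex * vertex)) (Y : Type)
    (F : (vertex -> vertex -> bool) -> Y) (A : set Y) :
  (forall E E', (forall p, p \in PL -> E p.1 p.2 = E' p.1 p.2) -> F E = F E') ->
  <<s edge_cyl >> [set E | A (F E)].
Proof.
apply: (@measurable_finitely_determined _ (g_sigma_algebraType edge_cyl) id).
by move=> u w; apply: sub_sigma_algebra; exists u, w.
Qed.

Lemma outdeg_size X E m y : outdeg X E (m, y) = size (children X E m y).
Proof. by rewrite /outdeg size_filter. Qed.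

Lemma perm_seq_along (N : nat) (L : seq nat) : perm_eq L (iota 1 N) ->
  exists r : 'S_N, forall x : seq nat,
    perm_seq r x = [seq nth 0 x y.-1 | y <- L].
Proof.
move=> hL.
have hs : size L = N by rewrite (perm_size hL) size_iota.
have hu : uniq L by rewrite (perm_uniq hL) iota_uniq.
have hr (i : 'I_N) : 0 < nth 0 L i <= N.
  have : nth 0 L i \in L by apply: mem_nth; rewrite hs.
  by rewrite (perm_mem hL) mem_iota add1n ltnS.
pose f (i : 'I_N) : 'I_N := insubd i (nth 0 L i).-1.
have fv i : val (f i) = (nth 0 L i).-1.
  rewrite val_insubd; case/andP: (hr i) => h1 h2; by rewrite prednK // h2.
have finj : injective f.
  move=> i j /(congr1 val); rewrite !fv => ev; apply: val_inj => /=.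
  case/andP: (hr i) => hi0 _; case/andP: (hr j) => hj0 _.
  have : nth 0 L i = nth 0 L j by rewrite -(prednK hi0) -(prednK hj0) ev.
  by move/eqP; rewrite nth_uniq ?hs // => /eqP.
exists (perm finj) => x; rewrite /perm_seq.
rewrite (eq_map (g := (fun j => nth 0 x (nth 0 L j).-1) \o val)); last first.
  by move=> i; rewrite permE /= fv.
rewrite map_comp val_enum_ord.
rewrite (eq_map (g := (fun y => nth 0 x y.-1) \o nth 0 L)) // map_comp.
by rewrite map_nth_iota0 -hs ?take_size.
Qed.

Definition depends_below (h : nat) (Th : set (nat -> seq nat)) :=
  forall w w', (forall j, j < h -> w j = w' j) -> Th w -> Th w'.

Lemma depends_below_trunc h Th w : depends_below h Th -> (Th w <-> Th (trunc h w)).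
Proof. by move=> hf; split; apply: hf => j hj; rewrite /trunc hj. Qed.

Lemma depends_below_coord h (A : set (seq nat)) : depends_below h.+1 (fun w => A (w h)).
Proof. by move=> w w' hw; rewrite hw. Qed.

Definition set_level (w : nat -> seq nat) h a : nat -> seq nat :=
  fun j => if j == h then a else w j.

Lemma depends_below_set_level h Th a :
  depends_below h.+1 Th -> depends_below h (fun w => Th (set_level w h a)).
Proof.
move=> hf w w' hw; apply: hf => j hj; rewrite /set_level; case: eqP => // /eqP hjh.
by apply: hw; rewrite ltn_neqAle hjh -ltnS.
Qed.

Definition fin_dim_events : set (set (nat -> seq nat)) :=
  [set Th | exists h, depends_below h Th].

Lemma fin_dim_events_setI : setI_closed fin_dim_events.
Proof.
move=> A B [h1 f1] [h2 f2]; exists (maxn h1 h2) => w w' hw [hA hB]; split.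
  by apply: f1 hA => j hj; apply: hw; rewrite leq_max hj.
by apply: f2 hB => j hj; apply: hw; rewrite leq_max hj orbT.
Qed.

Definition tree_vector (X : nat -> nat) (n : nat) (w : nat -> seq nat) : nat -> graph :=
  @Tvec X (forest n w) n 1%g.

(* a generating event of the graph sigma-algebra only sees finitely many
   generations of the forest, i.e. finitely many offspring sequences *)
Lemma tree_vector_cyl X n B : graphs_cyl B ->
  fin_dim_events [set w | B (tree_vector X n w)].
Proof.
case=> [[i [u ->]]|[i [u [v ->]]]].
  exists u.1 => w w' hw; rewrite /tree_vector /Tvec /=; case: insub => //= j.
  by apply: (desc_forest_agree hw); exact: leq_addl.
exists (u.1 + v.1).+1 => w w' hw; rewrite /tree_vector /Tvec /=; case: insub => //= j.
have hl a : a <= u.1 + v.1 -> a <= n + (u.1 + v.1).+1.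
  by move=> ha; rewrite (leq_trans _ (leq_addl n _)) // ltnW // ltnS.
case=> h1 h2 h3; split.
- by apply: (desc_forest_agree hw _ h1); rewrite hl // leq_addr.
- by apply: (desc_forest_agree hw _ h2); rewrite hl // leq_addl.
- by rewrite -(forest_agree _ hw) // (leq_trans _ (leq_addl n _)) // ltnS leq_addr.
Qed.

Lemma tree_vector_events X n B : <<s graphs_cyl >> B ->
  <<s fin_dim_events >> [set w | B (tree_vector X n w)].
Proof.
move=> hB.
suff : <<s graphs_cyl >> `<=` [set B | <<s fin_dim_events >> [set w | B (tree_vector X n w)]].
  by apply.
apply: smallest_sub; last by move=> A /tree_vector_cyl hA; apply: sub_sigma_algebra.
split.
- rewrite /= (_ : [set w | set0 (tree_vector X n w)] = set0); first exact: sigma_algebra0.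
  by apply/seteqP; split.
- move=> A hA /=.
  rewrite (_ : [set w | (setT `\` A) (tree_vector X n w)] = setT `\` [set w | A (tree_vector X n w)]).
    exact: sigma_algebraCD.
  by apply/seteqP; split => w /=.
- move=> F hF /=.
  rewrite (_ : [set w | (\bigcup_k F k) (tree_vector X n w)] = \bigcup_k [set w | F k (tree_vector X n w)]).
    exact: sigma_algebra_bigcup.
  by apply/seteqP; split => w /=.
Qed.

Section ForwardNeutral.
Variables (R : realType) (d : measure_display) (Omega : measurableType d)
  (P : probability Omega R) (tau : option nat) (X : nat -> nat)
  (k : nat -> seq nat) (e : Omega -> vertex -> vertex -> bool).
Hypotheses (he_meas : forall u w, measurable [set om | e om u w])
  (he_gen : forall om, genealogy tau X k (e om))
  (hfn : forward_neutral P tau X e).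
Variable n : nat.
Hypothesis hn : lvl_lt tau n.

Definition offspring_of (s : 'S_(X n)) E : nat -> seq nat := offspring X n E (roots s).

Definition offspring_event (s : 'S_(X n)) (Th : set (nat -> seq nat)) : set Omega :=
  [set om | Th (offspring_of s (e om))].

Lemma measurable_offspring_event (s : 'S_(X n)) h Th :
  depends_below h Th -> measurable (offspring_event s Th).
Proof.
move=> hf.
rewrite (_ : offspring_event s Th =
             [set om | Th (trunc h (offspring X n (e om) (roots s)))]).
  apply: (measurable_finitely_determined (PL := edge_slots X n h)
    (F := fun E => trunc h (offspring X n E (roots s)))) => // E E' hp.
  by apply: trunc_offspring_agree; [exact: roots_range | exact: agree_below_slots].
by apply/seteqP; split => om /=; rewrite -depends_below_trunc.
Qed.

Lemma measurable_level (s : 'S_(X n)) h (A : set (seq nat)) :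
  measurable [set om | A (level X n (e om) (roots s) h)].
Proof.
apply: (measurable_finitely_determined (PL := edge_slots X n h)
  (F := fun E => level X n E (roots s) h)) => // E E' hp.
exact: (level_agree (@roots_range X n s) (agree_below_slots hp)).
Qed.

Lemma level_perm_iota (s : 'S_(X n)) om h : lvl_lt tau (n + h) ->
  perm_eq (level X n (e om) (roots s) h) (iota 1 (X (n + h))).
Proof.
have hg := he_gen om.
elim: h => [|h IH] hl.
  apply: uniq_perm; [exact: roots_uniq | exact: iota_uniq |] => x.
  rewrite mem_iota add1n ltnS addn0 /=; apply/idP/idP; first exact: roots_range.
  case/andP => hx0 hxX; have hx : x.-1 < X n by rewrite prednK.
  apply/mapP; exists ((s^-1)%g (Ordinal hx)); first by rewrite mem_enum.
  by rewrite permKV /= prednK.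
apply: uniq_perm; [exact: (level_uniq n hg _ (roots_uniq s)) | exact: iota_uniq |] => y.
rewrite mem_iota add1n ltnS; apply/idP/idP; first exact/level_range/roots_range.
move=> hy; have hl' : lvl_lt tau (n + h) by apply: lvl_lt_pred; rewrite -addnS.
(* the parent of y lies in generation n + h, which is explored by induction *)
case: hg => _ [hp _].
have hpos : 0 < n + h.+1 by rewrite addnS.
have [u [hu _]] := hp (n + h.+1, y) (conj hl hy) hpos.
have [[_ /= hx] _ hlev] := genealogy_edge (he_gen om) hu.
case: u hu hx hlev => m x hu /= hx hlev.
have em : m = n + h by apply/eq_add_S; rewrite -hlev addnS.
subst m; rewrite /= addnS in hu *.
apply/flatten_mapP; exists x; first by rewrite (perm_mem (IH hl')) mem_iota add1n ltnS.
by rewrite mem_children hu andbT; rewrite addnS in hy.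
Qed.

Lemma level_extinct (s : 'S_(X n)) om h : ~~ lvl_lt tau (n + h.+1) ->
  level X n (e om) (roots s) h.+1 = [::].
Proof.
move=> hl; case E0: (level X n (e om) (roots s) h.+1) => [//|y l].
have : y \in level X n (e om) (roots s) h.+1 by rewrite E0 inE eqxx.
move=> /= /flatten_mapP [x _]; rewrite mem_children => /andP[_ he].
have [_ [hl2 _] /= _] := genealogy_edge (he_gen om) he.
by move: hl; rewrite addnS hl2.
Qed.

Lemma Kvec_extinct E m : genealogy tau X k E -> ~~ lvl_lt tau m.+1 ->
  Kvec X E m = nseq (X m) 0.
Proof.
move=> hg hl; rewrite /Kvec.
transitivity [seq 0 | _ <- iota 1 (X m)]; last by rewrite map_constant size_iota.
apply/eq_in_map => i _ /=; apply/eqP; rewrite -leqn0 leqNgt -has_count.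
apply/hasP => -[j _ he]; have [_ [hl2 _] /= _] := genealogy_edge hg he.
by move: hl; rewrite hl2.
Qed.

Definition offspring_values h : seq (seq nat) :=
  if lvl_lt tau (n + h) then
    permutations (if lvl_lt tau (n + h).+1 then k (n + h) else nseq (X (n + h)) 0)
  else [:: [::]].

Lemma offspring_values_uniq h : uniq (offspring_values h).
Proof. by rewrite /offspring_values; case: ifP => _ //; exact: permutations_uniq. Qed.

(* offspring h is a permutation of k (n + h) (or of zeros in the last
   generation) since level h is a permutation of generation n + h *)
Lemma offspring_in_values (s : 'S_(X n)) om h : offspring_of s (e om) h \in offspring_values h.
Proof.
rewrite /offspring_values; case: ifP => hl.
  have hp : perm_eq (offspring_of s (e om) h) (Kvec X (e om) (n + h)).
    rewrite /offspring_of /offspring /Kvec.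
    rewrite (eq_map (g := fun x => outdeg X (e om) (n + h, x))); last first.
      by move=> x; rewrite outdeg_size.
    exact: perm_map (level_perm_iota s om hl).
  rewrite mem_permutations; case: ifP => hl2.
    by case: (he_gen om) => _ [_ hk]; exact: perm_trans hp (hk _ hl2).
  by rewrite -(Kvec_extinct (he_gen om)) ?hl2.
case: h hl => [|h] hl; first by rewrite addn0 hn in hl.
by rewrite /offspring_of /offspring level_extinct ?hl // inE.
Qed.

Lemma offspring_root_level (s : 'S_(X n)) E : offspring_of s E 0 = perm_seq s (Kvec X E n).
Proof.
rewrite /offspring_of /offspring /= addn0 /roots /perm_seq -map_comp.
apply/eq_map => i /=.
by rewrite (nth_map 0%N) ?size_iota // nth_iota // add1n outdeg_size.
Qed.

Lemma offspring_along_level (s : 'S_(X n)) E h L (r : 'S_(X (n + h))) :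
  (forall x, perm_seq r x = [seq nth 0 x y.-1 | y <- L]) ->
  perm_eq L (iota 1 (X (n + h))) -> level X n E (roots s) h = L ->
  offspring_of s E h = perm_seq r (Kvec X E (n + h)).
Proof.
move=> hr hLp hLe; rewrite hr /offspring_of /offspring hLe.
apply/eq_in_map => y hy.
have : y \in iota 1 (X (n + h)) by rewrite -(perm_mem hLp).
rewrite mem_iota add1n ltnS => /andP[hy0 hyX].
rewrite (nth_map 0%N) ?size_iota; last by rewrite prednK.
by rewrite nth_iota ?prednK // add1n prednK // outdeg_size.
Qed.

Local Open Scope ereal_scope.

Lemma measure_partition_seq (Y : eqType) (f : Omega -> Y) (ls : seq Y) (S : set Omega) :
  measurable S -> (forall A : set Y, measurable [set om | A (f om)]) -> uniq ls ->
  P (S `&` [set om | f om \in ls]) = \sum_(y <- ls) P (S `&` [set om | f om = y]).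
Proof.
move=> hS hf; elim: ls => [|y ls IH] /=.
  rewrite big_nil (_ : _ `&` _ = set0) ?measure0 //.
  by apply/seteqP; split => om //= [].
case/andP => hy hu; rewrite big_cons -IH //.
have hm (A : set Y) : measurable (S `&` [set om | A (f om)]) by exact: measurableI.
rewrite -measureU; [|exact: (hm (fun z => z = y)) | exact: (hm (fun z => z \in ls)) |].
  congr (P _); apply/seteqP; split => om /=.
    by case=> hs; rewrite inE => /orP[/eqP ->|h]; [left|right].
  case=> -[hs h]; split => //; rewrite inE; first by rewrite h eqxx.
  by rewrite h orbT.
by apply/seteqP; split => om //= [[_ e1] [_ e2]]; move: hy; rewrite -e1 e2.
Qed.

(* law of the h-th offspring sequence: that of K_(n+h), or the empty
   sequence once the population has stopped *)
Definition level_weight h a : \bar R :=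
  if lvl_lt tau (n + h) then P [set om | Kvec X (e om) (n + h) = a]
  else (if a == [::] then 1 else 0).

Arguments level : simpl never.

(* the initial offspring sequence is K_n permuted by s, and K_n is exchangeable *)
Lemma split_root (s : 'S_(X n)) Th a : depends_below 0 Th ->
  P ([set om | offspring_of s (e om) 0 = a] `&` offspring_event s Th) =
  level_weight 0 a * P (offspring_event s Th).
Proof.
move=> hf; rewrite /level_weight addn0 hn.
case: (pselect (exists w, Th w)) => [[w0 hw0]|nw].
  have -> : offspring_event s Th = setT.
    by apply/seteqP; split => om // _; apply: hf hw0.
  rewrite setIT probability_setT mule1.
  rewrite (_ : [set om | offspring_of s (e om) 0 = a] =
               [set om | [set a] (perm_seq s (Kvec X (e om) n))]); last first.
    by apply/seteqP; split => om /=; rewrite offspring_root_level.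
  by rewrite -(hfn hn).1.
have -> : offspring_event s Th = set0.
  by apply/seteqP; split => om // hom; apply: nw; exists (offspring_of s (e om)).
by rewrite setI0 measure0 mule0.
Qed.

Lemma split_extinct (s : 'S_(X n)) h Th a : ~~ lvl_lt tau (n + h.+1) ->
  P ([set om | offspring_of s (e om) h.+1 = a] `&` offspring_event s Th) =
  level_weight h.+1 a * P (offspring_event s Th).
Proof.
move=> hl; rewrite /level_weight (negbTE hl).
have hK om : offspring_of s (e om) h.+1 = [::].
  by rewrite /offspring_of /offspring level_extinct.
case: (eqVneq a [::]) => ha.
  rewrite (_ : [set om | offspring_of s (e om) h.+1 = a] = setT) ?setTI ?mul1e //.
  by apply/seteqP; split => om // _; rewrite /= hK ha.
rewrite (_ : [set om | offspring_of s (e om) h.+1 = a] = set0) ?set0I ?measure0 ?mul0e //.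
by apply/seteqP; split => om //=; rewrite hK => ha'; move: ha; rewrite -ha' eqxx.
Qed.

(* The key step: on the event {level h+1 = L}, determined by the past below
   generation m = n+h+1, offspring h+1 is K_m read along L; forward
   neutrality makes it independent of the past and distributed as K_m. *)
Lemma split_given_level (s : 'S_(X n)) h Th a L :
  lvl_lt tau (n + h.+1) -> depends_below h.+1 Th ->
  perm_eq L (iota 1 (X (n + h.+1))) ->
  P (([set om | offspring_of s (e om) h.+1 = a] `&` offspring_event s Th)
       `&` [set om | level X n (e om) (roots s) h.+1 = L]) =
  P [set om | Kvec X (e om) (n + h.+1) = a] *
  P (offspring_event s Th `&` [set om | level X n (e om) (roots s) h.+1 = L]).
Proof.
set m := (n + h.+1)%N => hl hf hLp.
have [r hr] := perm_seq_along hLp.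
have hR := @roots_range X n s.
pose A := [set x : seq nat | perm_seq r x = a].
pose C := [set E : vertex -> vertex -> bool | level X n E (roots s) h.+1 = L /\
            Th (trunc h.+1 (offspring X n E (roots s)))].
have hC : <<s edge_cyl >> C.
  apply: (@edge_cyl_finitely_determined (edge_slots X n h.+1) _
    (fun E => (level X n E (roots s) h.+1, trunc h.+1 (offspring X n E (roots s))))
    [set p | p.1 = L /\ Th p.2]) => E E' /agree_below_slots ha.
  by rewrite (level_agree hR ha (leqnn _)) (trunc_offspring_agree hR ha).
have hpast E : level X n (past m E) (roots s) h.+1 = level X n E (roots s) h.+1 /\
    trunc h.+1 (offspring X n (past m E) (roots s)) = trunc h.+1 (offspring X n E (roots s)).
  have ha : agree_below X n (past m E) E h.+1 by move=> m' x y hm' _ _; rewrite /past /= hm'.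
  by rewrite (level_agree hR ha (leqnn _)) (trunc_offspring_agree hR ha).
have htrunc om := depends_below_trunc (offspring_of s (e om)) hf.
have e1 : ([set om | offspring_of s (e om) h.+1 = a] `&` offspring_event s Th)
      `&` [set om | level X n (e om) (roots s) h.+1 = L] =
    [set om | A (Kvec X (e om) m)] `&` [set om | C (past m (e om))].
  rewrite /A /C; apply/seteqP; split => om /=.
    case=> -[hK hT] hLe; split; first by rewrite -(offspring_along_level hr hLp hLe).
    by case: (hpast (e om)) => -> ->; split => //; apply/htrunc.
  case=> hA; case: (hpast (e om)) => -> -> [hLe hT]; split => //; split.
    by rewrite /= (offspring_along_level hr hLp hLe).
  by apply/htrunc.
have e2 : offspring_event s Th `&` [set om | level X n (e om) (roots s) h.+1 = L] =
    [set om | C (past m (e om))].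
  rewrite /C; apply/seteqP; split => om /=.
    by case=> hT hLe; case: (hpast (e om)) => -> ->; split => //; apply/htrunc.
  by case: (hpast (e om)) => -> -> [hLe hT]; split => //; apply/htrunc.
rewrite e1 e2 (hfn hl).2 //; congr (_ * _).
rewrite (_ : [set om | A (Kvec X (e om) m)] =
             [set om | [set a] (perm_seq r (Kvec X (e om) m))]) //.
by rewrite -(hfn hl).1.
Qed.

Lemma split_live (s : 'S_(X n)) h Th a : lvl_lt tau (n + h.+1) -> depends_below h.+1 Th ->
  P ([set om | offspring_of s (e om) h.+1 = a] `&` offspring_event s Th) =
  level_weight h.+1 a * P (offspring_event s Th).
Proof.
move=> hl hf; rewrite /level_weight hl.
set S := _ `&` _.
have mpre := measurable_offspring_event s hf.
have mS : measurable S.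
  apply: measurableI => //.
  have := measurable_offspring_event s (@depends_below_coord h.+1 (fun x => x = a)).
  by rewrite /offspring_event.
(* all of generation n+h+1 is explored, so level h+1 is a permutation *)
have hcov (S' : set Omega) : S' = S' `&` [set om |
    level X n (e om) (roots s) h.+1 \in permutations (iota 1 (X (n + h.+1)))].
  apply/seteqP; split => om //=; last by case.
  by move=> h1; split => //; rewrite mem_permutations; apply: level_perm_iota.
rewrite (hcov S) (measure_partition_seq mS (measurable_level s h.+1) (permutations_uniq _)).
rewrite (hcov (offspring_event s Th)).
rewrite (measure_partition_seq mpre (measurable_level s h.+1) (permutations_uniq _)).
rewrite ge0_sume_distrr; last by move=> *; apply: measure_ge0.
rewrite !big_seq; apply: eq_bigr => L hL; apply: split_given_level => //.
by rewrite -mem_permutations.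
Qed.

Lemma split_offspring (s : 'S_(X n)) h Th a : depends_below h Th ->
  P ([set om | offspring_of s (e om) h = a] `&` offspring_event s Th) =
  level_weight h a * P (offspring_event s Th).
Proof.
case: h => [|h] hf; first exact: split_root.
by case: (boolP (lvl_lt tau (n + h.+1))) => hl; [exact: split_live | exact: split_extinct].
Qed.

Lemma offspring_event_decompose (s : 'S_(X n)) h Th : depends_below h.+1 Th ->
  P (offspring_event s Th) = \sum_(a <- offspring_values h)
    level_weight h a * P (offspring_event s (fun w => Th (set_level w h a))).
Proof.
move=> hf; have mpre := measurable_offspring_event s hf.
rewrite (_ : offspring_event s Th = offspring_event s Th `&`
               [set om | offspring_of s (e om) h \in offspring_values h]); last first.
  apply/seteqP; split => om //=; last by case.
  by move=> h1; split => //; apply: offspring_in_values.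
rewrite (measure_partition_seq mpre
  (fun A => measurable_offspring_event s (@depends_below_coord h A)) (offspring_values_uniq h)).
rewrite !big_seq; apply: eq_bigr => a _.
rewrite -split_offspring; last exact: depends_below_set_level.
have hset w : w h = a -> Th w <-> Th (set_level w h a).
  by move=> hw; split; apply: hf => j _; rewrite /set_level; case: eqP => // ->.
congr (P _); apply/seteqP; split => om /=.
  by case=> hT hK; split => //; apply/(hset _ hK).
by case=> hK hT; split => //; apply/(hset _ hK).
Qed.

Lemma fin_dim_law_indep h Th : depends_below h Th -> forall s1 s2 : 'S_(X n),
  P (offspring_event s1 Th) = P (offspring_event s2 Th).
Proof.
elim: h Th => [|h IH] Th hf s1 s2.
  by congr (P _); apply/seteqP; split => om; apply: hf.
rewrite (offspring_event_decompose s1 hf) (offspring_event_decompose s2 hf).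
by apply: eq_bigr => a _; rewrite (IH _ (depends_below_set_level (a := a) hf) s1 s2).
Qed.

(* ... hence, by Dynkin's pi-lambda theorem, neither does their joint law *)
Lemma offspring_law_indep (s1 s2 : 'S_(X n)) Th : <<s fin_dim_events >> Th ->
  P (offspring_event s1 Th) = P (offspring_event s2 Th).
Proof.
pose H := [set Th | measurable (offspring_event s1 Th) /\
  measurable (offspring_event s2 Th) /\
  P (offspring_event s1 Th) = P (offspring_event s2 Th)].
suff : <<s fin_dim_events >> `<=` H by move=> sub /sub [_ []].
apply: (lambda_system_subset fin_dim_events_setI (D := setT)) => //.
- apply/dynkin_lambda_system; split.
  + by rewrite /H /= (_ : offspring_event s1 setT = setT) // (_ : offspring_event s2 setT = setT).
  + move=> A [m1 [m2 eA]]; split; [exact: measurableC m1 | split; first exact: measurableC m2].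
    rewrite (_ : offspring_event s1 (~` A) = ~` offspring_event s1 A) //.
    rewrite (_ : offspring_event s2 (~` A) = ~` offspring_event s2 A) //.
    by rewrite !probability_setC // eA.
  + move=> F tF HF.
    have hb s : offspring_event s (\bigcup_k F k) = \bigcup_k offspring_event s (F k).
      by apply/seteqP; split => om /=.
    have ht s : trivIset setT (fun k => offspring_event s (F k)).
      move=> i j _ _ [om [hi hj]]; apply: tF => //; by exists (offspring_of s (e om)).
    rewrite /H /= !hb; split; [|split].
    * by apply: bigcupT_measurable => i; case: (HF i).
    * by apply: bigcupT_measurable => i; case: (HF i) => _ [].
    * rewrite !measure_bigcup //; first last.
      - by move=> i _; case: (HF i).
      - by move=> i _; case: (HF i) => _ [].
      by apply: eq_eseriesr => i _; case: (HF i) => _ [].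
- move=> Th0 [h hf]; split; first exact: measurable_offspring_event hf.
  by split; [exact: measurable_offspring_event hf | exact: fin_dim_law_indep hf s1 s2].
Qed.

End ForwardNeutral.

Theorem proposition3p4 (R : realType) (d : measure_display)
  (Omega : measurableType d) (P : probability Omega R)
  (tau : option nat) (X : nat -> nat) (k : nat -> seq nat)
  (e : Omega -> vertex -> vertex -> bool)
  (hdata : data_ok tau X k)
  (he_meas : forall u w, measurable [set om | e om u w])
  (he_gen : forall om, genealogy tau X k (e om))
  (hfn : forward_neutral P tau X e)
  (n : nat) (hn : lvl_lt tau n) (s : 'S_(X n))
  (B : set (nat -> graph)) (hBm : <<s graphs_cyl >> B) (hBi : iso_invariant B) :
  P [set om | B (@Tvec X (e om) n 1%g)] = P [set om | B (@Tvec X (e om) n s)].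
Proof.
(* B only sees trees up to isomorphism, so it is an event on the offspring
   sequences of the exploration in order s' *)
have tree_event (s' : 'S_(X n)) : [set om | B (@Tvec X (e om) n s')] =
    offspring_event e s' [set w | B (tree_vector X n w)].
  apply/seteqP; split => om /= hb; apply: hBi hb => j.
    exact: Tvec_forest_iso (he_gen om).
  exact/dg_iso_sym/(Tvec_forest_iso _ _ (he_gen om)).
rewrite !tree_event.
exact: (offspring_law_indep he_meas he_gen hfn hn _ _ (tree_vector_events X n hBm)).
Qed.
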